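(* Let $r\in\mathbb{F}_2((x^{-1}))$, $k\in\mathbb{N}$, and $f\in\mathbb{F}_2[x]$ with $f(1)=1$. Then $p(r)_i=p(r+(1+x)^kf)_i$ for all $0\le i<k$, and $p(r)_k\ne p(r+(1+x)^kf)_k$.
   Context: $\mathbb{F}_2((x^{-1}))$ is the field of formal series $\sum_{z\in\mathbb{Z}}a_zx^z$, $a_z\in\mathbb{F}_2$, with $a_z\ne0$ for only finitely many positive $z$. The polynomial part is $[\sum a_zx^z]=\sum_{z\ge0}a_zx^z$. $S(r)=\frac{r}{x+1}$ if $[r](1)=0$ and $S(r)=\frac{xr}{x+1}$ if $[r](1)=1$. The parity sequence is $p(r)_k=[S^k(r)](1)\in\mathbb{F}_2$ for $k\in\mathbb{N}$. *)

From HB Require Import structures.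
From mathcomp Require Import all_boot all_order all_algebra.
Set Implicit Arguments. Unset Strict Implicit. Unset Printing Implicit Defensive.
Import Order.TTheory GRing.Theory Num.Theory.
Local Open Scope ring_scope.

(* F_2((x^{-1})): formal series sum_{z in Z} a_z x^z over F_2 with a_z = 0
   for all z above some explicit bound [ldeg]. *)
Record laurent := Laurent {
  coef : int -> 'F_2 ;
  ldeg : int ;
  coef_ub : forall z : int, ldeg < z -> coef z = 0 }.

Definition leq_series (r s : laurent) := forall z, coef r z = coef s z.

Definition ppart (r : laurent) : {poly 'F_2} :=
  \poly_(i < (absz (ldeg r)).+1) coef r (Posz i).

Lemma addL_ub (r s : laurent) z :
  Num.max (ldeg r) (ldeg s) < z -> coef r z + coef s z = 0.
Proof.
rewrite gt_max => /andP [h1 h2].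
by rewrite (coef_ub h1) (coef_ub h2) addr0.
Qed.
Definition addL (r s : laurent) : laurent :=
  @Laurent (fun z => coef r z + coef s z) _ (@addL_ub r s).

Definition pcoef (f : {poly 'F_2}) (z : int) : 'F_2 :=
  match z with Posz n => f`_n | Negz _ => 0 end.
Lemma polyL_ub (f : {poly 'F_2}) z : (size f)%:Z < z -> pcoef f z = 0.
Proof.
case: z => [n|n] //= h.
rewrite nth_default //. by rewrite ltz_nat in h; apply: ltnW.
Qed.
Definition polyL (f : {poly 'F_2}) : laurent :=
  @Laurent (pcoef f) _ (@polyL_ub f).

Lemma mulxL_ub (r : laurent) z : ldeg r + 1 < z -> coef r (z - 1) = 0.
Proof. move=> h; apply: coef_ub; by rewrite ltrBrDr. Qed.
Definition mulxL (r : laurent) : laurent :=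
  @Laurent (fun z => coef r (z - 1)) _ (@mulxL_ub r).

(* Division by x + 1: since 1/(x+1) = sum_{j>=1} x^{-j}, the coefficient of
   r/(x+1) at z is sum_{j>=1} a_{z+j}, a finite sum (terms with z+j > ldeg
   vanish). *)
Definition divx1_coef (r : laurent) (z : int) : 'F_2 :=
  \sum_(j < absz (ldeg r - z)) coef r (z + (j.+1)%:Z).
Lemma divx1_ub (r : laurent) z : ldeg r < z -> divx1_coef r z = 0.
Proof.
move=> h; apply: big1 => j _; apply: coef_ub.
apply: (lt_le_trans h); rewrite lerDl; by [].
Qed.
Definition divx1L (r : laurent) : laurent :=
  @Laurent (divx1_coef r) _ (@divx1_ub r).

Definition Smap (r : laurent) : laurent :=
  if (ppart r).[1] == 0 then divx1L r else divx1L (mulxL r).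

Definition parity (r : laurent) (k : nat) : 'F_2 := (ppart (iter k Smap r)).[1].

From mathcomp Require Import all_boot all_order all_algebra zify.
Import Order.TTheory GRing.Theory Num.Theory.
Local Open Scope ring_scope.
Set Implicit Arguments. Unset Strict Implicit. Unset Printing Implicit Defensive.

(* Since x + 1 vanishes at 1 over F_2, adding (x + 1) h to r does not change
   the bit [r](1), so S takes the same branch on r and on r + (x + 1) h, and
   S (r + (x + 1) h) is S r + h or S r + x h.  Hence after i < k steps the
   perturbation (x + 1)^k f has become (x + 1)^(k - i) g with g(1) = 1, which
   is invisible to the parity bit, while after k steps it is a polynomial g
   with g(1) = 1, which flips it. *)

Lemma F2_addrr (a : 'F_2) : a + a = 0.
Proof. by rewrite (addrr_pchar2 (@pchar_Fp 2 isT)). Qed.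

Lemma F2_horner1_X1 : ('X + 1 : {poly 'F_2}).[1] = 0.
Proof. by rewrite hornerD hornerX hornerC F2_addrr. Qed.

Lemma F2_horner1_X1_exprS_mul n (g : {poly 'F_2}) :
  (('X + 1) ^+ n.+1 * g).[1] = 0.
Proof. by rewrite hornerM horner_exp F2_horner1_X1 expr0n mul0r. Qed.

(* (x + 1) s = r, read off coefficientwise. *)
Definition is_divx1 (r s : laurent) :=
  forall z, coef s (z - 1) + coef s z = coef r z.

(* The coefficient of a quotient at z is determined by the one at z + 1, so
   two quotients agree by descending induction from a common degree bound. *)
Lemma is_divx1_uniq r s t : is_divx1 r s -> is_divx1 r t -> leq_series s t.
Proof.
move=> hs ht; pose M := Num.max (ldeg s) (ldeg t).
suff agree : forall (n : nat) z, M < z + n%:Z -> coef s z = coef t z.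
  by move=> z; apply: (agree (absz (M - z)).+1); lia.
elim=> [|n IH] z.
  by rewrite addr0 gt_max => /andP[lt_s lt_t]; rewrite !coef_ub.
move=> lt_M; have := hs (z + 1).
rewrite -(ht (z + 1)) !addrK (IH (z + 1)); last by lia.
exact: addIr.
Qed.

Lemma is_divx1_ext r r' s : leq_series r r' -> is_divx1 r s -> is_divx1 r' s.
Proof. by move=> e h z; rewrite h e. Qed.

Lemma is_divx1_addL r1 r2 s1 s2 : is_divx1 r1 s1 -> is_divx1 r2 s2 ->
  is_divx1 (addL r1 r2) (addL s1 s2).
Proof. by move=> h1 h2 z /=; rewrite addrACA h1 h2. Qed.

Lemma divx1LP r : is_divx1 r (divx1L r).
Proof.
move=> z /=; rewrite /divx1_coef.
have [le_z | lt_z] := lerP z (ldeg r).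
  have -> : absz (ldeg r - (z - 1))%R = (absz (ldeg r - z)%R).+1 by lia.
  rewrite big_ord_recl subrK -addrA.
  rewrite (eq_bigr (fun j : 'I__ => coef r (z + j.+1%:Z))) ?F2_addrr ?addr0 //.
  by move=> j _; rewrite lift0; congr (coef r _); lia.
by rewrite !big1 ?addr0 ?coef_ub // => j _; apply: coef_ub; lia.
Qed.

Lemma pcoefD p q z : pcoef (p + q) z = pcoef p z + pcoef q z.
Proof. by case: z => n /=; rewrite ?coefD ?addr0. Qed.

Lemma pcoefXM g z : pcoef ('X * g) z = pcoef g (z - 1).
Proof.
case: z => [[|n]|n]; first by rewrite /= coefXM.
- have -> : Posz n.+1 - 1 = Posz n by lia.
  by rewrite /= coefXM.
- by have -> : Negz n - 1 = Negz n.+1 by lia.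
Qed.

Lemma is_divx1_polyL g : is_divx1 (polyL (('X + 1) * g)) (polyL g).
Proof. by move=> z /=; rewrite mulrDl mul1r pcoefD pcoefXM. Qed.

Lemma divx1L_eq r s : leq_series r s -> leq_series (divx1L r) (divx1L s).
Proof.
move=> e; apply: is_divx1_uniq (divx1LP r) _.
by apply: is_divx1_ext (divx1LP s) => z; rewrite e.
Qed.

Lemma divx1L_addL_polyL s g :
  leq_series (divx1L (addL s (polyL (('X + 1) * g)))) (addL (divx1L s) (polyL g)).
Proof.
apply: is_divx1_uniq (divx1LP _) _.
exact: is_divx1_addL (divx1LP s) (is_divx1_polyL g).
Qed.

Lemma ppart_coef r i : (ppart r)`_i = coef r (Posz i).
Proof.
rewrite /ppart coef_poly; case: ifP => // h.
by rewrite coef_ub //; move: h; lia.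
Qed.

Lemma ppart_eq r s : leq_series r s -> ppart r = ppart s.
Proof. by move=> e; apply/polyP => i; rewrite !ppart_coef e. Qed.

Lemma horner1_ppart_addL_polyL s g :
  (ppart (addL s (polyL g))).[1] = (ppart s).[1] + g.[1].
Proof.
have -> : ppart (addL s (polyL g)) = ppart s + g.
  by apply/polyP => i; rewrite coefD !ppart_coef.
exact: hornerD.
Qed.

Lemma Smap_eq r s : leq_series r s -> leq_series (Smap r) (Smap s).
Proof.
move=> e; rewrite /Smap (ppart_eq e).
by case: ifP => _; apply: divx1L_eq => z /=; rewrite e.
Qed.

Lemma Smap_addL_polyL s g : exists2 c : {poly 'F_2}, c.[1] = 1 &
  leq_series (Smap (addL s (polyL (('X + 1) * g)))) (addL (Smap s) (polyL (c * g))).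
Proof.
rewrite /Smap horner1_ppart_addL_polyL hornerM F2_horner1_X1 mul0r addr0.
case: ifP => _.
  by exists 1; rewrite ?hornerC // mul1r; apply: divx1L_addL_polyL.
exists 'X; first by rewrite hornerX.
have E : leq_series (mulxL (addL s (polyL (('X + 1) * g))))
                    (addL (mulxL s) (polyL (('X + 1) * ('X * g)))).
  by move=> z /=; rewrite mulrCA pcoefXM.
by move=> z; rewrite (divx1L_eq E) divx1L_addL_polyL.
Qed.

Lemma iter_Smap_addL_polyL r f i n : exists2 g : {poly 'F_2}, g.[1] = f.[1] &
  leq_series (iter i Smap (addL r (polyL (('X + 1) ^+ (i + n) * f))))
             (addL (iter i Smap r) (polyL (('X + 1) ^+ n * g))).
Proof.
elim: i n => [|i IH] n; first by exists f.
have [g g1 Eg] := IH n.+1; rewrite addSnnS.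
have [c c1 Ec] := Smap_addL_polyL (iter i Smap r) (('X + 1) ^+ n * g).
exists (c * g); first by rewrite hornerM c1 mul1r.
by move=> z; rewrite /= (Smap_eq Eg) exprS -mulrA Ec /= mulrCA.
Qed.

Theorem lemma2p7 (r : laurent) (k : nat) (f : {poly 'F_2}) :
  f.[1] = 1 ->
  (forall i : nat, (i < k)%N ->
     parity r i = parity (addL r (polyL (('X + 1) ^+ k * f))) i) /\
  parity r k != parity (addL r (polyL (('X + 1) ^+ k * f))) k.
Proof.
move=> f1; split.
  move=> i lt_ik; have [g _ Eg] := iter_Smap_addL_polyL r f i (k - i).
  rewrite (subnKC (ltnW lt_ik)) -(subnSK lt_ik) in Eg.
  by rewrite /parity (ppart_eq Eg) horner1_ppart_addL_polyL
             F2_horner1_X1_exprS_mul addr0.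
have [g g1 Eg] := iter_Smap_addL_polyL r f k 0.
rewrite addn0 expr0 mul1r in Eg.
rewrite /parity (ppart_eq Eg) horner1_ppart_addL_polyL g1 f1.
by rewrite -{1}[(ppart _).[1]]addr0 (inj_eq (addrI _)) eq_sym oner_eq0.
Qed.
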